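(* Let $G$ be an abelian Hausdorff topological group and $A\subseteq G$ with $0\notin A$. The following are equivalent: (i) $A$ is absolutely summable in $G$; (ii) the Kalton map $K_A:S_A\to G$ is continuous and its continuous extension $\overline{K_A}:P_A\to\overline{G}$ satisfies $\overline{K_A}(P_A)\subseteq G$. Furthermore, if these equivalent conditions hold, then $\overline{K_A}(h)=\sum_{a\in A}K_A(h_a)$ for every $h=\{h_a\}_{a\in A}\in P_A$ (the sum taken in the sense of summability of the indexed family $\{K_A(h_a)\}_{a\in A}$ in $G$).
   Context: $\overline{H}$ denotes the completion of a topological group $H$. For $a\in G$, $\langle a\rangle$ is the cyclic subgroup generated by $a$ with the subspace topology. $P_A=\prod_{a\in A}\langle a\rangle$ has the Tychonoff product topology and $S_A=\bigoplus_{a\in A}\langle a\rangle\subseteq P_A$ the subspace topology; the summand $\langle a\rangle$ of $S_A$ is identified with the corresponding coordinate subgroup. The Kalton map $K_A:S_A\to G$ is the unique homomorphism extending each inclusion $\langle a\rangle\to G$. When $K_A$ is continuous it extends uniquely to a continuous homomorphism $\overline{S_A}\to\overline{G}$; as $\overline{S_A}=\prod_{a\in A}\overline{\langle a\rangle}\supseteq P_A$, its restriction to $P_A$ is denoted $\overline{K_A}$. An indexed family $\{x_a:a\in A\}$ has sum $g=\sum_{a\in A}x_a$ if for every neighbourhood $U$ of $0$ there is a finite $F\subseteq A$ with $g-\sum_{a\in E}x_a\in U$ for every finite $E\subseteq A$ containing $F$. $A$ is absolutely summable if for every family $\{z_a:a\in A\}$ of integers the family $\{z_aa:a\in A\}$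 has a sum in $G$. *)

From HB Require Import structures.
From mathcomp Require Import all_boot all_order all_algebra.
From mathcomp Require Import all_classical all_reals all_analysis.
Unset Printing Implicit Defensive.
Import GRing.Theory Num.Theory.
Local Open Scope classical_set_scope.
Local Open Scope ring_scope.

Section Kalton.
Context {G : topologicalZmodType}.

Definition cyclic_sub (a : G) : set G := [set x | exists z : int, x = a *~ z].

Definition Aidx (A : set G) : choiceType := {x : G | x \in A}.

Definition has_sum {I : choiceType} (x : I -> G) (g : G) : Prop :=
  forall U : set G, nbhs (0 : G) U ->
    exists F : set I, finite_set F /\
      forall E : set I, finite_set E -> F `<=` E -> U (g - \sum_(i \in E) x i).

Definition abs_summable (A : set G) : Prop :=
  forall z : Aidx A -> int, exists g : G, has_sum (fun a => (val a) *~ z a) g.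

(* P_A = prod_{a in A} <a>, as a subspace of the product space G^A *)
Definition P_A (A : set G) : set {ptws Aidx A -> G} :=
  [set h | forall a, cyclic_sub (val a) (h a)].

Definition S_A (A : set G) : set {ptws Aidx A -> G} :=
  [set h | P_A A h /\ finite_set [set a | h a != 0]].

(* Kalton map (meaningful on S_A): sum of the finitely many nonzero coordinates *)
Definition kalton (A : set G) (h : {ptws Aidx A -> G}) : G :=
  \sum_(a \in [set a | h a != 0]) h a.

Definition kcoord (A : set G) (a : Aidx A) (x : G) : {ptws Aidx A -> G} :=
  fun b => if b == a then x else 0.

End Kalton.

(* For h in P_A the truncations h|E (E finite) lie in S_A, are mapped by K_A
   to the partial sums sum_(a in E) h_a, and converge to h in the product
   topology as E grows.  Hence every continuous extension F of K_A to P_A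
   satisfies F h = sum_a h_a, which gives (ii) -> (i) and the formula for the
   extension.  Conversely, absolute summability yields a uniform Cauchy
   condition: for every neighbourhood W of 0 there is a finite F0 such that
   sum_(a in E) q_a lies in W for all q in P_A and all finite E disjoint from F0
   (otherwise infinitely many pairwise disjoint bad blocks glue into one element
   of P_A without a sum).  So h |-> sum_a h_a is continuous on P_A: the
   difference of the sums at h and p is a finite sum over F0, small for p near
   h, plus a tail controlled by the Cauchy condition.  In a Hausdorff group this
   map agrees with K_A on S_A. *)

From HB Require Import structures.
From mathcomp Require Import all_boot all_order all_algebra.
From mathcomp Require Import all_classical all_reals all_analysis.
Import GRing.Theory Num.Theory.
Local Open Scope classical_set_scope.
Local Open Scope ring_scope.

Lemma cvg_ptws (I : choiceType) (V : topologicalType)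
    (F : set_system {ptws I -> V}) (f : {ptws I -> V}) : Filter F ->
  (forall i, (fun g : {ptws I -> V} => g i) @ F --> f i) -> F --> f.
Proof.
move=> FF Fi; apply/cvg_sup => i; apply/cvg_image.
  by apply/seteqP; split => [y _ //|y _]; exists (fun _ => y).
move=> U /Fi /= FU; exists ((fun g : {ptws I -> V} => g i) @^-1` U) => //.
apply/seteqP; split => [y [g Ug <-] //|y Uy].
by exists (fun j => if j == i then y else f j); rewrite /= eqxx.
Qed.

Definition finite_supersets (I : Type) : set_system (set I) :=
  filter_from finite_set (fun F0 => [set E | finite_set E /\ F0 `<=` E]).

Section FiniteSets.
Context {I : Type}.

Global Instance finite_supersets_filter : ProperFilter (finite_supersets I).
Proof.
apply: filter_from_proper; last by move=> F0 fF0; exists F0; split.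
apply: filter_from_filter; first by exists set0; exact: finite_set0.
move=> F1 F2 fF1 fF2; exists (F1 `|` F2); first by rewrite /= finite_setU.
by move=> E [fE]; rewrite subUset => -[].
Qed.

Lemma finite_meets_finitely_many (E : nat -> set I) (F : set I) :
  (forall m n i, E m i -> E n i -> m = n) -> finite_set F ->
  exists n, E n `&` F = set0.
Proof.
move=> Edisj fF; apply: contrapT => /forallNP meets.
have /choice[f fP] : forall n, exists i, E n i /\ F i.
  move=> n; have [i [Ei Fi]] : E n `&` F !=set0 by apply/set0P/eqP.
  by exists i.
have finj : {in [set: nat] &, injective f}.
  move=> m n _ _ fmn; apply: (Edisj _ _ (f m)); first by case: (fP m).
  by rewrite fmn; case: (fP n).
have : finite_set (f @` [set: nat]).
  by apply: sub_finite_set fF => _ [n _ <-]; case: (fP n).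
by rewrite (eq_finite_set (inj_card_eq finj)); exact: infinite_nat.
Qed.

Lemma disjoint_finite_blocks (Q : set I -> Prop) :
  (forall F0, finite_set F0 ->
    exists E, [/\ finite_set E, E `&` F0 = set0 & Q E]) ->
  exists E : nat -> set I, (forall n, finite_set (E n) /\ Q (E n)) /\
    (forall m n i, E m i -> E n i -> m = n).
Proof.
move=> avoid.
have /choice[next nextP] : forall F0, exists E,
    finite_set F0 -> [/\ finite_set E, E `&` F0 = set0 & Q E].
  move=> F0; have [fF0|nfF0] := pselect (finite_set F0); last first.
    by exists set0; move/nfF0.
  by have [E EP] := avoid F0 fF0; exists E.
pose S := fix S n := if n is m.+1 then S m `|` next (S m) else set0.
have fS n : finite_set (S n).
  elim: n => [|n IH] /=; first exact: finite_set0.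
  by rewrite finite_setU; split => //; case: (nextP _ IH).
exists (fun n => next (S n)); split => [n|].
  by case: (nextP _ (fS n)).
have sES m n : (m < n)%N -> next (S m) `<=` S n.
  elim: n => [//|n IH]; rewrite ltnS leq_eqVlt => /orP[/eqP ->|/IH sub] i Ei /=.
    by right.
  by left; apply: sub.
have disjS n : next (S n) `&` S n = set0 by case: (nextP _ (fS n)).
move=> m n i Emi Eni; case: (ltngtP m n) => // [mn|nm].
  have : (next (S n) `&` S n) i by split => //; exact: sES Emi.
  by rewrite disjS.
have : (next (S m) `&` S m) i by split => //; exact: sES Eni.
by rewrite disjS.
Qed.

End FiniteSets.

Section TopologicalZmodule.
Context {G : topologicalZmodType}.

Lemma continuous_add (T : topologicalType) (f g : T -> G) :
  continuous f -> continuous g -> continuous (fun x => f x + g x).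
Proof.
move=> cf cg x; apply: (@continuous_comp _ _ _ (fun x => (f x, g x))
  (fun p : G * G => p.1 + p.2)); last exact: add_continuous.
by apply: cvg_pair; [exact: cf|exact: cg].
Qed.

Lemma continuous_sub (T : topologicalType) (f g : T -> G) :
  continuous f -> continuous g -> continuous (fun x => f x - g x).
Proof.
move=> cf cg x; apply: (@continuous_comp _ _ _ (fun x => (f x, g x))
  (fun p : G * G => p.1 - p.2)); last exact: sub_continuous.
by apply: cvg_pair; [exact: cf|exact: cg].
Qed.

Lemma continuous_sum (T : topologicalType) (J : Type) (s : seq J)
    (f : J -> T -> G) :
  (forall j, continuous (f j)) -> continuous (fun x => \sum_(j <- s) f j x).
Proof.
move=> cf; elim: s => [|j s IH].
  under eq_fun do rewrite big_nil; exact: cst_continuous.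
under eq_fun do rewrite big_cons; exact: continuous_add.
Qed.

Lemma nbhs0_split (op : G -> G -> G) (U : set G) :
  continuous (fun p : G * G => op p.1 p.2) -> op 0 0 = 0 -> nbhs 0 U ->
  exists2 W : set G, nbhs 0 W & forall x y, W x -> W y -> U (op x y).
Proof.
move=> cop op00 U0; have := cop (0, 0) U; rewrite /= op00 => /(_ U0).
case=> -[P Q] /= [P0 Q0] PQ; exists (P `&` Q); first exact: filterI.
by move=> x y [Px _] [_ Qy]; apply: (PQ (x, y)).
Qed.

Lemma nbhs_subl (g x : G) (V : set G) :
  nbhs (g - x) V -> nbhs x [set y | V (g - y)].
Proof.
have csub : continuous (fun y : G => g - y).
  by apply: continuous_sub; [exact: cst_continuous|move=> y; exact: cvg_id].
by move=> Vgx; apply: (csub x).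
Qed.

Lemma fsumrB (I : choiceType) (E : set I) (f g : I -> G) : finite_set E ->
  \sum_(i \in E) (f i - g i) = \sum_(i \in E) f i - \sum_(i \in E) g i.
Proof. by move=> fE; rewrite !fsbig_finite // sumrB. Qed.

Lemma nbhs_fsum_coord (I : choiceType) (F0 : set I) (h : {ptws I -> G})
    (W : set G) : finite_set F0 -> nbhs 0 W ->
  nbhs h [set p : {ptws I -> G} | W (\sum_(i \in F0) (h i - p i))].
Proof.
move=> fF0 W0.
have cdiff i : continuous (fun p : {ptws I -> G} => h i - p i).
  by apply: continuous_sub; [exact: cst_continuous|exact: proj_continuous].
have csum := continuous_sum _ _ (finmap.enum_fset (fset_set F0)) _ cdiff.
have := csum h W; rewrite /= big1 => [/(_ W0) Wnear|i _]; last exact: subrr.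
apply: filterS (Wnear : nbhs h _) => p /=.
by rewrite fsbig_finite.
Qed.

Section Summability.
Context {I : choiceType} {x : I -> G}.
Let psum (E : set I) := \sum_(i \in E) x i.

Lemma has_sumE (g : G) :
  has_sum x g <-> psum @ finite_supersets I --> g.
Proof.
split=> [xg V /= Vg|psumg U U0].
  have V0 : nbhs 0 [set y | V (g - y)] by apply: nbhs_subl; rewrite subr0.
  have [F [fF HF]] := xg _ V0.
  by exists F => // E [fE FE]; have := HF E fE FE; rewrite /= opprB addrC subrK.
have Ug : nbhs g [set y | U (g - y)] by apply: nbhs_subl; rewrite subrr.
have [F fF HF] := psumg _ Ug.
by exists F; split => // E fE FE; exact: HF.
Qed.

Lemma has_sum_unique (g g' : G) : hausdorff_space G ->
  has_sum x g -> has_sum x g' -> g = g'.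
Proof.
by move=> hG /has_sumE xg /has_sumE xg'; exact: cvg_unique xg xg'.
Qed.

Lemma has_sum_finite_support : finite_set [set i | x i != 0] ->
  has_sum x (psum [set i | x i != 0]).
Proof.
move=> fsupp U U0; exists [set i | x i != 0]; split => // E fE suppE.
rewrite /psum (fsbig_widen _ _ _ suppE) ?subrr; first exact: nbhs_singleton.
by move=> i [_ /negP]; rewrite negbK => /eqP.
Qed.

Lemma has_sum_cauchy (g : G) (W : set G) : has_sum x g -> nbhs 0 W ->
  exists2 F : set I, finite_set F &
    forall E, finite_set E -> E `&` F = set0 -> W (psum E).
Proof.
move=> xg W0; have [W' W'0 W'W] := nbhs0_split (fun a b => a - b) W
  (@sub_continuous G) (subr0 0) W0.
have [F [fF HF]] := xg _ W'0; exists F => // E fE EF.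
have fFE : finite_set (F `|` E) by rewrite finite_setU.
have := W'W _ _ (HF F fF (@subset_refl _ F)) (HF _ fFE (@subsetUl _ F E)).
rewrite /psum fsbigU0 //; last by rewrite setIC EF.
by rewrite opprD opprK addrA (addrAC g) subrr add0r addKr.
Qed.

End Summability.
End TopologicalZmodule.

Section Kalton.
Context {G : topologicalZmodType} (A : set G).
Local Notation I := (Aidx A).
Local Notation GA := {ptws I -> G}.

Lemma kalton_supp (p : GA) (E : set I) :
  [set a | p a != 0] `<=` E -> kalton A p = \sum_(a \in E) p a.
Proof.
move=> sE; apply: fsbig_widen => // a [_ /negP].
by rewrite negbK => /eqP.
Qed.

Lemma kcoordK a x : kalton A (kcoord A a x) = x.
Proof.
rewrite (@kalton_supp _ [set a]); first by rewrite fsbig_set1 /kcoord eqxx.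
by move=> b /=; rewrite /kcoord; case: (b =P a) => // _; rewrite eqxx.
Qed.

Lemma P_A_coef (h : GA) :
  P_A A h -> exists z : I -> int, forall a, h a = val a *~ z a.
Proof.
move=> Ph; have [z zP] := @choice I int (fun a z => h a = val a *~ z) Ph.
by exists z.
Qed.

Lemma P_A_sub (h p : GA) : P_A A h -> P_A A p -> P_A A (fun a => h a - p a).
Proof.
move=> /P_A_coef[zh zhP] /P_A_coef[zp zpP] a.
by exists (zh a - zp a); rewrite zhP zpP mulrzBr.
Qed.

Lemma abs_summableP :
  abs_summable A <-> forall h : GA, P_A A h -> exists g, has_sum h g.
Proof.
split=> [AS h /P_A_coef[z zP]|AS z].
  have [g zg] := AS z; exists g.
  by have -> : h = (fun a => val a *~ z a) by apply: boolp.funext.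
by apply: (AS (fun a => val a *~ z a)) => a; exists (z a).
Qed.

Definition trunc (h : GA) (E : set I) : GA :=
  fun a => if a \in E then h a else 0.

Lemma trunc_P_A h E : P_A A h -> P_A A (trunc h E).
Proof.
move=> Ph a; rewrite /trunc; case: ifP => _; first exact: Ph.
by exists 0; rewrite mulr0z.
Qed.

Lemma trunc_supp h E : [set a | trunc h E a != 0] `<=` E.
Proof.
by move=> a /=; rewrite /trunc; case: ifP => [/set_mem //|_]; rewrite eqxx.
Qed.

Lemma trunc_S_A h E : P_A A h -> finite_set E -> S_A A (trunc h E).
Proof.
move=> Ph fE; split; first exact: trunc_P_A.
exact: sub_finite_set (trunc_supp h E) fE.
Qed.

Lemma kalton_trunc h E : kalton A (trunc h E) = \sum_(a \in E) h a.
Proof.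
rewrite (@kalton_supp _ E (trunc_supp h E)).
by apply: eq_fsbigr => a aE; rewrite /trunc aE.
Qed.

Lemma trunc_cvg h : trunc h @ finite_supersets I --> h.
Proof.
apply: cvg_ptws => a V /= /nbhs_singleton Vha.
exists [set a]; first exact: finite_set1.
by move=> E [_ aE] /=; rewrite /trunc ifT //; apply/mem_set/aE.
Qed.

Lemma extension_has_sum (F : GA -> G) : {within P_A A, continuous F} ->
  (forall h, S_A A h -> F h = kalton A h) ->
  forall h, P_A A h -> has_sum h (F h).
Proof.
move=> /subspace_continuousP cF FK h Ph; apply/has_sumE.
have truncW : trunc h @ finite_supersets I --> within (P_A A) (nbhs h).
  move=> W /= hW; have near_h := trunc_cvg h _ hW.
  apply: filterS (near_h : finite_supersets I _) => E /=; apply.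
  exact: trunc_P_A.
apply: cvg_trans _ (cvg_trans (cvg_app F truncW) (cF h Ph)).
apply: near_eq_cvg; exists set0 => [|E [fE _]]; first exact: finite_set0.
by rewrite /= FK ?kalton_trunc //; exact: trunc_S_A.
Qed.

Lemma abs_summable_cauchy (W : set G) : abs_summable A -> nbhs 0 W ->
  exists2 F0 : set I, finite_set F0 &
    forall (E : set I) (q : GA), finite_set E -> E `&` F0 = set0 -> P_A A q ->
      W (\sum_(a \in E) q a).
Proof.
move=> /abs_summableP AS W0; apply: contrapT => noF0.
pose bad (E : set I) := exists2 q : GA, P_A A q & ~ W (\sum_(a \in E) q a).
have [E [EQ Edisj]] : exists E : nat -> set I,
    (forall n, finite_set (E n) /\ bad (E n)) /\
    (forall m n a, E m a -> E n a -> m = n).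
  apply: (@disjoint_finite_blocks _ bad) => F0 fF0; apply: contrapT => noE.
  apply: noF0; exists F0 => // E q fE EF0 Pq; apply: contrapT => nW.
  by apply: noE; exists E; split => //; exists q.
have /choice[Q QP] : forall n, exists q, P_A A q /\ ~ W (\sum_(a \in E n) q a).
  by move=> n; have [_ [q Pq nW]] := EQ n; exists q.
pose block a := xget 0%N [set n | E n a].
have blockE n a : E n a -> block a = n.
  move=> Ena; rewrite /block (@xget_unique _ 0%N [set n | E n a] n) //.
  by move=> m Ema; exact: Edisj Ema Ena.
pose q : GA := fun a => Q (block a) a.
have [g qg] := AS q (fun a => (QP (block a)).1 a).
have [F fF qF] := has_sum_cauchy _ _ qg W0.
have [n EnF] := finite_meets_finitely_many _ _ Edisj fF.
have [_ nW] := QP n; apply: nW.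
have <- : \sum_(a \in E n) q a = \sum_(a \in E n) Q n a.
  by apply: eq_fsbigr => a /set_mem Ena; rewrite /q (blockE n).
exact: qF (EQ n).1 EnF.
Qed.

Definition coord_sum (h : GA) : G := xget 0 [set g | has_sum h g].

Lemma coord_sum_has_sum h :
  abs_summable A -> P_A A h -> has_sum h (coord_sum h).
Proof. by move=> /abs_summableP AS /AS[g hg]; apply: xgetPex; exists g. Qed.

Lemma coord_sum_kalton h :
  hausdorff_space G -> S_A A h -> coord_sum h = kalton A h.
Proof.
move=> hG [_ fsupp]; have hK := has_sum_finite_support fsupp.
exact: has_sum_unique hG (xgetPex 0 (ex_intro _ _ hK)) hK.
Qed.

Lemma coord_sum_continuous :
  abs_summable A -> {within P_A A, continuous coord_sum}.
Proof.
move=> AS; apply/subspace_continuousP => h Ph V /= V0.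
have U0 : nbhs 0 [set y | V (coord_sum h - y)].
  by apply: nbhs_subl; rewrite subr0.
have [W1 W10 W1U] := nbhs0_split +%R _ (@add_continuous G) (addr0 0) U0.
have [W W0 WW1] := nbhs0_split +%R _ (@add_continuous G) (addr0 0) W10.
have W0N : nbhs 0 [set y | W (0 - y)] by apply: nbhs_subl; rewrite subr0.
have [F0 fF0 tail] := abs_summable_cauchy _ AS W0.
have [Fh [fFh hFh]] := coord_sum_has_sum _ AS Ph _ W0.
have := nbhs_fsum_coord _ _ h _ fF0 W0.
rewrite /within; apply: filterS => p /= WF0 Pp.
have [Fp [fFp pFp]] := coord_sum_has_sum _ AS Pp _ W0N.
pose E := F0 `|` Fh `|` Fp.
have fE : finite_set E by rewrite !finite_setU.
have F0E : F0 `<=` E by move=> a F0a; left; left.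
have splitE : \sum_(a \in E) h a - \sum_(a \in E) p a =
    \sum_(a \in F0) (h a - p a) + \sum_(a \in E `&` ~` F0) (h a - p a).
  by rewrite -fsumrB // (fsbigID F0) // (setIidr F0E).
change (V (coord_sum p)); rewrite -[coord_sum p](subKr (coord_sum h)).
have -> : coord_sum h - coord_sum p =
    (coord_sum h - \sum_(a \in E) h a + (\sum_(a \in E) p a - coord_sum p)) +
    (\sum_(a \in E) h a - \sum_(a \in E) p a).
  by rewrite addrAC -addrA !subrKA.
rewrite splitE.
apply: W1U; apply: WW1.
- by apply: hFh => // a Fha; left; right.
- by rewrite -[_ - coord_sum p]opprB -sub0r; apply: pFp => // a Fpa; right.
- exact: WF0.
- apply: tail; [exact: finite_setIl|by rewrite -setIA setICl setI0|].
  exact: P_A_sub.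
Qed.

End Kalton.

Theorem proposition7p1 (G : topologicalZmodType) (A : set G) :
  hausdorff_space G -> ~ A 0 ->
  (abs_summable A <->
     ({within S_A A, continuous (kalton A)} /\
      exists F : {ptws Aidx A -> G} -> G,
        {within P_A A, continuous F} /\
        (forall h, S_A A h -> F h = kalton A h)))
  /\
  (abs_summable A ->
     forall F : {ptws Aidx A -> G} -> G,
       {within P_A A, continuous F} ->
       (forall h, S_A A h -> F h = kalton A h) ->
       forall h, P_A A h ->
         has_sum (fun a => kalton A (kcoord A a (h a))) (F h)).
Proof.
move=> hG _; split; first split.
- move=> AS; have coord_sumK h : S_A A h -> coord_sum A h = kalton A h.
    exact: coord_sum_kalton.
  split; last by exists (coord_sum A); split => //; exact: coord_sum_continuous.
  have SP : S_A A `<=` P_A A by move=> h [].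
  have := continuous_subspaceW SP (coord_sum_continuous _ AS).
  by apply: subspace_eq_continuous => h /set_mem /coord_sumK.
- move=> [_ [F [cF FK]]]; apply/abs_summableP => h Ph.
  by exists (F h); exact: extension_has_sum.
- move=> _ F cF FK h Ph.
  have -> : (fun a => kalton A (kcoord A a (h a))) = h.
    by apply: boolp.funext => a; rewrite kcoordK.
  exact: extension_has_sum.
Qed.
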